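(* Let $(N,+,* )$ be a nilpotent ring with adjoint operation $x\circ y=x+y+x*y$, let $S$ be a subring and $I$ a two-sided ideal of $N$ with $S\cap I=\{0\}$ and $N=S+I$. Then every $x\in N$ can be written uniquely as $x=s\circ i$ with $s\in S$, $i\in I$; define $x\bullet y=s\circ y\circ i$, so that $(N,+,\bullet)$ is a left brace, and let $r(x,y)=(\sigma_x(y),\tau_y(x))$ be its Yang–Baxter map. Let $X\subseteq N$ be such that $(X,r)$ is a solution of the set-theoretic Yang–Baxter equation. Let $J\subseteq I\cap X$ be a two-sided ideal of the ring $N$ and let $k:X\to X$ satisfy $k(x)-x\in J$ for all $x\in X$. Then $\tau_{k(y)}(x)-\tau_y(x)\in J$ for all $x,y\in X$. *)

(* A (non-unital, associative) ring N is given by an abelian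
   group V : zmodType together with an explicit multiplication [mul]. *)
From mathcomp Require Import all_boot all_algebra.
From Stdlib Require Import ClassicalEpsilon.
Set Implicit Arguments. Unset Strict Implicit. Unset Printing Implicit Defensive.
Import GRing.Theory.
Local Open Scope ring_scope.

Section NilRing.
Variable V : zmodType.
Variable mul : V -> V -> V.

Definition is_ring : Prop :=
  [/\ forall x y z, mul x (mul y z) = mul (mul x y) z,
      forall x y z, mul x (y + z) = mul x y + mul x z &
      forall x y z, mul (x + y) z = mul x z + mul y z].

Fixpoint rprod (x : V) (l : seq V) : V :=
  match l with [::] => x | y :: l' => mul x (rprod y l') end.

Definition nilpotent_ring : Prop :=
  exists n : nat, forall (x : V) (l : seq V), size l = n -> rprod x l = 0.

Definition subring (S : V -> Prop) : Prop :=
  [/\ S 0, forall x y, S x -> S y -> S (x - y) &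
      forall x y, S x -> S y -> S (mul x y)].

Definition ideal (I : V -> Prop) : Prop :=
  [/\ I 0, forall x y, I x -> I y -> I (x - y),
      forall r x, I x -> I (mul r x) & forall r x, I x -> I (mul x r)].

Definition circ (x y : V) : V := x + y + mul x y.

Variables (S I : V -> Prop).

Definition decomp_spec (x : V) (p : V * V) : Prop :=
  [/\ S p.1, I p.2 & x = circ p.1 p.2].

Definition decomp (x : V) : V * V :=
  epsilon (inhabits (0, 0)) (decomp_spec x).

Definition bullet (x y : V) : V :=
  circ (circ (decomp x).1 y) (decomp x).2.

Definition binv (x : V) : V :=
  epsilon (inhabits 0) (fun z => bullet z x = 0 /\ bullet x z = 0).

(* lambda map of the brace; sigma_x(y) = lambda_x(y) *)
Definition sigma (x y : V) : V := - x + bullet x y.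

Definition tau (y x : V) : V := bullet (binv (sigma x y)) (bullet x y).

Definition ybmap (p : V * V) : V * V := (sigma p.1 p.2, tau p.2 p.1).

Definition r12 (t : V * V * V) : V * V * V :=
  let p := ybmap (t.1.1, t.1.2) in (p.1, p.2, t.2).
Definition r23 (t : V * V * V) : V * V * V :=
  let p := ybmap (t.1.2, t.2) in (t.1.1, p.1, p.2).

Definition is_solution (X : V -> Prop) : Prop :=
  (forall x y, X x -> X y -> X (sigma x y) /\ X (tau y x)) /\
  (forall x y z, X x -> X y -> X z ->
     r12 (r23 (r12 (x, y, z))) = r23 (r12 (r23 (x, y, z)))).

End NilRing.

(* Nilpotence makes (N, o) a group: the adjoint inverse of x is the finite
   series -x + x^2 - x^3 + ...  Modulo an ideal J contained in I, the
   decomposition x = s o i keeps s and moves i only by an element of J, so the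
   brace product x . y = s o y o i, its inverse, lambda and tau all respect
   congruence modulo J.  Hence tau_(k y) x = tau_y x mod J whenever
   k y = y mod J. *)
From mathcomp Require Import all_boot all_algebra.
From Stdlib Require Import ClassicalEpsilon.
Set Implicit Arguments. Unset Strict Implicit. Unset Printing Implicit Defensive.
Import GRing.Theory.
Local Open Scope ring_scope.

Section RingLaws.
Variables (V : zmodType) (mul : V -> V -> V).
Hypothesis ringV : is_ring mul.

Lemma mulvA x y z : mul x (mul y z) = mul (mul x y) z.
Proof. by case: ringV. Qed.
Lemma mulvDr x y z : mul x (y + z) = mul x y + mul x z.
Proof. by case: ringV. Qed.
Lemma mulvDl x y z : mul (x + y) z = mul x z + mul y z.
Proof. by case: ringV. Qed.
Lemma mulv0 x : mul x 0 = 0.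
Proof. by apply: (@addrI _ (mul x 0)); rewrite -mulvDr !addr0. Qed.
Lemma mul0v x : mul 0 x = 0.
Proof. by apply: (@addrI _ (mul 0 x)); rewrite -mulvDl !addr0. Qed.
Lemma mulvN x y : mul x (- y) = - mul x y.
Proof. by apply: (@addrI _ (mul x y)); rewrite -mulvDr !subrr mulv0. Qed.
Lemma mulNv x y : mul (- x) y = - mul x y.
Proof. by apply: (@addrI _ (mul x y)); rewrite -mulvDl !subrr mul0v. Qed.
Lemma mulvBr x y z : mul x (y - z) = mul x y - mul x z.
Proof. by rewrite mulvDr mulvN. Qed.
Lemma mulvBl x y z : mul (x - y) z = mul x z - mul y z.
Proof. by rewrite mulvDl mulNv. Qed.

Lemma circ0v x : circ mul 0 x = x.
Proof. by rewrite /circ mul0v add0r addr0. Qed.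
Lemma circv0 x : circ mul x 0 = x.
Proof. by rewrite /circ mulv0 !addr0. Qed.
Lemma circA x y z : circ mul x (circ mul y z) = circ mul (circ mul x y) z.
Proof.
by rewrite /circ !mulvDr !mulvDl mulvA !addrA [LHS](ACl (1*2*5*3*6*4*7)).
Qed.

Lemma circ_series x m :
  circ mul x (iter m (fun z => - x - mul x z) 0) = iter m (mul (- x)) x.
Proof.
elim: m => [|m /= <-]; first exact: circv0.
rewrite /circ mulvBr !mulvN mulNv !mulvDr !opprD.
by rewrite addNKr addrA (addrC (- mul _ _)).
Qed.

Lemma iterS_mul_rprod y x m :
  iter m.+1 (mul y) x = rprod mul y (rcons (nseq m y) x).
Proof. by elim: m => //= m <-. Qed.

Lemma nilpotent_iter_mul :
  nilpotent_ring mul -> exists n, forall y x, iter n (mul y) x = 0.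
Proof.
case=> -[|n] nilN; first by exists 0%N => y x; apply: (nilN x [::]).
by exists n.+1 => y x; rewrite iterS_mul_rprod nilN // size_rcons size_nseq.
Qed.

Lemma subringN (P : V -> Prop) x : subring mul P -> P x -> P (- x).
Proof. by case=> P0 PB _ Px; rewrite -sub0r; apply: PB. Qed.
Lemma subringD (P : V -> Prop) x y : subring mul P -> P x -> P y -> P (x + y).
Proof.
move=> subP Px Py; case: (subP) => _ PB _.
by rewrite -[y]opprK; apply: PB => //; apply: subringN.
Qed.
Lemma subring_circ (P : V -> Prop) x y :
  subring mul P -> P x -> P y -> P (circ mul x y).
Proof.
move=> subP Px Py; case: (subP) => _ _ PM.
by apply: subringD => //; [apply: subringD | apply: PM].
Qed.
Lemma ideal_subring (P : V -> Prop) : ideal mul P -> subring mul P.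
Proof. by case=> P0 PB PL _; split=> // x y _; apply: PL. Qed.

End RingLaws.

Section AdjointGroup.
Variables (V : zmodType) (mul : V -> V -> V) (n : nat).
Hypotheses (ringV : is_ring mul) (nilV : forall y x, iter n (mul y) x = 0).
Local Notation "x \circ y" := (circ mul x y) (at level 40, left associativity).

Definition circV x := iter n (fun z => - x - mul x z) 0.

Lemma circVr x : x \circ circV x = 0.
Proof. by rewrite circ_series // nilV. Qed.

Lemma circVl x : circV x \circ x = 0.
Proof.
have xVV : x = circV (circV x).
  by rewrite -{1}[x](circv0 ringV) -(circVr (circV x)) circA // circVr circ0v.
by rewrite {2}xVV circVr.
Qed.

Lemma circKV x y : x \circ (circV x \circ y) = y.
Proof. by rewrite circA // circVr circ0v. Qed.

Lemma circVK x y : circV x \circ (x \circ y) = y.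
Proof. by rewrite circA // circVl circ0v. Qed.

Lemma circI x : injective (circ mul x).
Proof. by move=> y z /(congr1 (circ mul (circV x))); rewrite !circVK. Qed.

Lemma subring_circV (P : V -> Prop) x : subring mul P -> P x -> P (circV x).
Proof.
move=> subP Px; case: (subP) => P0 PB PM; rewrite /circV.
by elim: (n) => //= m Pm; apply: PB; [exact: subringN subP Px | exact: PM].
Qed.

End AdjointGroup.

Definition eqmod (V : zmodType) (J : V -> Prop) (a b : V) := J (a - b).

Section Brace.
Variables (V : zmodType) (mul : V -> V -> V) (n : nat).
Hypotheses (ringV : is_ring mul) (nilV : forall y x, iter n (mul y) x = 0).
Variables S I : V -> Prop.
Hypotheses (subS : subring mul S) (idI : ideal mul I).
Hypotheses (SI0 : forall x, S x -> I x -> x = 0)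
           (SIspan : forall x, exists s i, [/\ S s, I i & x = s + i]).
Local Notation "x \circ y" := (circ mul x y) (at level 40, left associativity).
Local Notation circV := (circV mul n).
Local Notation decomp := (decomp mul S I).
Local Notation bullet := (bullet mul S I).
Local Notation binv := (binv mul S I).

Let subI : subring mul I := ideal_subring idI.

Lemma decomp_exists x : exists p, decomp_spec mul S I x p.
Proof.
have [s [i [Ss Ii ->]]] := SIspan x.
exists (s, circV s \circ (s + i)); split => /=; [by [] | | by rewrite circKV].
have -> : circV s \circ (s + i) = circV s \circ s + i + mul (circV s) i.
  by rewrite /circ (mulvDr ringV) !addrA [LHS](ACl (1*2*4*3*5)).
rewrite circVl // add0r; apply: (subringD subI Ii).
by case: idI => _ _ IL _; apply: IL.
Qed.

Lemma decomp_unique s1 i1 s2 i2 : S s1 -> I i1 -> S s2 -> I i2 ->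
  s1 \circ i1 = s2 \circ i2 -> s1 = s2 /\ i1 = i2.
Proof.
move=> Ss1 Ii1 Ss2 Ii2 eq12.
have s1E : s1 = s2 \circ (i2 \circ circV i1).
  by rewrite circA // -eq12 -circA // circVr // circv0.
have V0 : circV s2 \circ s1 = 0.
  apply: SI0; first by apply: (subring_circ subS) => //; apply: subring_circV.
  rewrite s1E circVK //; apply: (subring_circ subI) => //.
  exact: (subring_circV n subI Ii1).
have s12 : s1 = s2 by rewrite -(circKV ringV nilV s2 s1) V0 circv0.
by split=> //; apply: (circI ringV nilV (x := s1)); rewrite eq12 s12.
Qed.

Lemma decompP x : decomp_spec mul S I x (decomp x).
Proof. exact: epsilon_spec (decomp_exists x). Qed.

Lemma decompE s i : S s -> I i -> decomp (s \circ i) = (s, i).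
Proof.
move=> Ss Ii; move: (decompP (s \circ i)).
case: (decomp _) => s' i' [/= Ss' Ii' E].
by have [-> ->] := decomp_unique Ss' Ii' Ss Ii (esym E).
Qed.

Lemma binv_rinv x :
  (exists z, bullet z x = 0 /\ bullet x z = 0) -> bullet x (binv x) = 0.
Proof. by move/(epsilon_spec (inhabits 0)) => []. Qed.

Lemma binvE x : binv x = circV (decomp x).1 \circ circV (decomp x).2.
Proof.
move: (decompP x) (@binv_rinv x); rewrite /bullet.
case: (decomp x) => s i [/= Ss Ii xE].
have [SVs IVi] : S (circV s) /\ I (circV i).
  by split; [exact: (subring_circV n subS Ss) | exact: (subring_circV n subI Ii)].
move=> rinv; have VxE : s \circ binv x \circ i = 0.
  apply: rinv; exists (circV s \circ circV i); rewrite decompE //= xE; split.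
    by rewrite circVK // circVr.
  by rewrite circKV // circVl.
have -> : binv x = circV s \circ (s \circ binv x \circ i \circ circV i).
  by rewrite -circA // circVr // circv0 // circVK.
by rewrite VxE circ0v.
Qed.

Variable J : V -> Prop.
Hypotheses (idJ : ideal mul J) (JI : forall x, J x -> I x).
Let subJ : subring mul J := ideal_subring idJ.
Local Notation eqmodJ := (eqmod J).
Local Notation sigma := (sigma mul S I).
Local Notation tau := (tau mul S I).

Lemma eqmod_refl a : eqmodJ a a.
Proof. by rewrite /eqmod subrr; case: idJ. Qed.

Lemma eqmod_sym a b : eqmodJ a b -> eqmodJ b a.
Proof.
by move=> Jab; rewrite /eqmod -opprB; apply: (subringN subJ).
Qed.

Lemma eqmod_add a a' b b' :
  eqmodJ a a' -> eqmodJ b b' -> eqmodJ (a + b) (a' + b').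
Proof.
move=> Ja Jb; rewrite /eqmod opprD addrACA.
exact: (subringD subJ).
Qed.

Lemma eqmod_opp a a' : eqmodJ a a' -> eqmodJ (- a) (- a').
Proof. by move=> Ja; rewrite /eqmod -opprD; apply: (subringN subJ). Qed.

Lemma eqmod_mul a a' b b' :
  eqmodJ a a' -> eqmodJ b b' -> eqmodJ (mul a b) (mul a' b').
Proof.
rewrite /eqmod => Ja Jb; case: (idJ) => _ _ JL JR.
have -> : mul a b - mul a' b' = mul (a - a') b + mul a' (b - b').
  by rewrite mulvBl // mulvBr // addrA subrK.
by apply: (subringD subJ); [apply: JR | apply: JL].
Qed.

Lemma eqmod_circ a a' b b' :
  eqmodJ a a' -> eqmodJ b b' -> eqmodJ (a \circ b) (a' \circ b').
Proof.
by move=> ha hb; apply: eqmod_add; [apply: eqmod_add | apply: eqmod_mul].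
Qed.

Lemma eqmod_circV a b : eqmodJ a b -> eqmodJ (circV a) (circV b).
Proof.
move=> hab; rewrite /circV; elim: (n) => [|m IH] /=; first exact: eqmod_refl.
by apply: eqmod_add (eqmod_opp hab) (eqmod_opp (eqmod_mul hab IH)).
Qed.

Lemma decomp_eqmod x x' :
  eqmodJ x x' ->
  (decomp x).1 = (decomp x').1 /\ eqmodJ (decomp x).2 (decomp x').2.
Proof.
move=> hx; move: (decompP x) (decompP x').
case: (decomp x) (decomp x') => s i [s' i'] [/= Ss Ii xE] [/= Ss' Ii' x'E].
have Jj : J (circV x \circ x').
  have := eqmod_circ (eqmod_refl (circV x)) (eqmod_sym hx).
  by rewrite circVl // /eqmod subr0.
have x'E2 : x' = s \circ (i \circ (circV x \circ x')).
  by rewrite circA // -xE circKV.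
have [-> <-] := decomp_unique Ss (subring_circ subI Ii (JI Jj)) Ss' Ii'
  (etrans (esym x'E2) x'E).
split=> //; rewrite -{1}[i](circv0 ringV); apply: eqmod_circ (eqmod_refl i) _.
by apply: eqmod_sym; rewrite /eqmod subr0.
Qed.

Lemma bullet_eqmod x x' y y' :
  eqmodJ x x' -> eqmodJ y y' -> eqmodJ (bullet x y) (bullet x' y').
Proof.
move=> hx hy; have [sE hi] := decomp_eqmod hx.
rewrite /bullet sE; apply: eqmod_circ hi.
by apply: eqmod_circ hy; apply: eqmod_refl.
Qed.

Lemma binv_eqmod x x' : eqmodJ x x' -> eqmodJ (binv x) (binv x').
Proof.
move=> hx; have [sE hi] := decomp_eqmod hx.
by rewrite !binvE sE; apply: eqmod_circ (eqmod_refl _) (eqmod_circV hi).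
Qed.

Lemma sigma_eqmod x x' y y' :
  eqmodJ x x' -> eqmodJ y y' -> eqmodJ (sigma x y) (sigma x' y').
Proof.
by move=> hx hy; apply: eqmod_add (eqmod_opp hx) (bullet_eqmod hx hy).
Qed.

Lemma tau_eqmod x x' y y' :
  eqmodJ x x' -> eqmodJ y y' -> eqmodJ (tau y x) (tau y' x').
Proof.
move=> hx hy; apply: bullet_eqmod; last exact: bullet_eqmod.
by apply: binv_eqmod; apply: sigma_eqmod.
Qed.

End Brace.

Theorem mainTheorem7 (V : zmodType) (mul : V -> V -> V)
    (S I X J : V -> Prop) (k : V -> V) :
  is_ring mul -> nilpotent_ring mul ->
  subring mul S -> ideal mul I ->
  (forall x, S x -> I x -> x = 0) ->
  (forall x, exists s i, [/\ S s, I i & x = s + i]) ->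
  is_solution mul S I X ->
  ideal mul J -> (forall x, J x -> I x /\ X x) ->
  (forall x, X x -> X (k x)) -> (forall x, X x -> J (k x - x)) ->
  forall x y, X x -> X y -> J (tau mul S I (k y) x - tau mul S I y x).
Proof.
move=> ringV /nilpotent_iter_mul[n nilV] subS idI SI0 SIspan _ idJ JIX _ kJ.
move=> x y _ Xy.
have JI z : J z -> I z by case/JIX.
exact: (tau_eqmod ringV nilV subS idI SI0 SIspan idJ JI
  (eqmod_refl idJ x) (kJ y Xy)).
Qed.
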